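(* Consider a vehicle moving in the plane with dynamics $\dot q(t)=f(q(t),u(t))$ and intermittent ranging output $z_k=\|P_k-B_{i_k}\|$, where $P_k=P(t_k)$, and suppose the standing assumptions below (Property and Assumption) hold. Let $u^\star$ be a known admissible input on $[t_0,t_f]$ generating the abstract trajectory $\mathcal{T}$ with measurement points $\mathcal{P}_k(\Delta x,\Delta y,\phi)$, $k=0,\dots,k_f$. If there exists a unique roto-translation $(\Delta x,\Delta y,\phi)$ of $\mathcal{T}$ such that $$\|\mathcal{P}_k(\Delta x,\Delta y,\phi)-B_i\|=\rho_{k,i}$$ for each anchor index $i$ whose measurement is available at time $k$ and for all $k=0,\dots,k_f$, then the system is $u^\star$-constructible.
   Context: A vehicle with state $q\in\mathbb{R}^n$ and input $u\in\mathbb{R}^m$ obeys $\dot q=f(q,u)$; part of $q$ is its planar position $P(t)=[x(t),y(t)]^\top$ in a world frame $\mathcal{W}$. In a vehicle frame $\mathcal{V}$ the initial condition is set to $0$ (the frame is centred at the initial position), and the position $P_V(t)$ in $\mathcal{V}$ is computable from the known input history $u(s)$, $s\in[0,t]$. Property: given $P_V(t)$ for $t\in[t_0,t_f]$, there is a unique triple $(\Delta x,\Delta y,\phi)$ with $P(t)=R_\phi P_V(t)+[\Delta x,\Delta y]^\top$ for all $t\in[t_0,t_f]$, where $R_\phi=\begin{bmatrix}\cos\phi&-\sin\phi\\ \sin\phi&\cos\phi\end{bmatrix}$. Anchors are at known points $B_i=[X_i,Y_i]^\top$, $i=1,\dots,p$. Measurements are taken at known instants $t_k$ ($t_{k+1}>t_k$),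 one per instant: $z_k=\|P(t_k)-B_{i_k}\|$, also denoted $\rho_{k,i}$ with $i=i_k$. Measurement points: $\mathcal{P}_k(\Delta x,\Delta y,\phi)=R_\phi P_V(t_k)+[\Delta x,\Delta y]^\top$, $k=0,\dots,N_m-1$; the abstract trajectory $\mathcal{T}$ is the union of the segments joining consecutive $\mathcal{P}_k$. Assumption: the system with the continuous-time position $P(t)$ as output is constructible (its final state can be reconstructed from the input and output histories). Two final states $q_f,\bar q_f$ are $u^\star$-backward indistinguishable on $T=[t_0,t_f]$ if, under input $u^\star$, the trajectories ending at $q_f$ and $\bar q_f$ produce identical output sequences $z_k$, $k=0,\dots,k_f$; $\mathcal{I}^{u^\star}_{(b)}(q_f)$ denotes the set of final states backward indistinguishable from $q_f$. The system is $u^\star$-constructible at $q_f$ if $\mathcal{I}^{u^\star}_{(b)}(q_f)=\{q_f\}$, and $u^\star$-constructible if this holds at every $q_f$. *)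

From HB Require Import structures.
From mathcomp Require Import all_boot all_order all_algebra.
From mathcomp Require Import all_classical all_reals all_analysis.
Set Implicit Arguments. Unset Strict Implicit. Unset Printing Implicit Defensive.
Import Order.TTheory GRing.Theory Num.Theory.
Import numFieldNormedType.Exports.
Local Open Scope ring_scope.
Local Open Scope classical_set_scope.

Section Ranging.
Variables (R : realType) (n m : nat).

(* planar position P = [x, y] extracted from the state q in R^n,
   located at the (distinct) coordinates ix, iy of q *)
Definition pos (ix iy : 'I_n) (q : 'rV[R]_n) : R * R := (q ord0 ix, q ord0 iy).

Definition rot (phi : R) (v : R * R) : R * R :=
  (cos phi * v.1 - sin phi * v.2, sin phi * v.1 + cos phi * v.2).

(* roto-translation  v |-> R_phi v + [dx, dy], with tr = (dx, dy, phi) *)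
Definition rototrans (tr : R * R * R) (v : R * R) : R * R :=
  ((rot tr.2 v).1 + tr.1.1, (rot tr.2 v).2 + tr.1.2).

Definition dist2 (a b : R * R) : R :=
  Num.sqrt ((a.1 - b.1) ^+ 2 + (a.2 - b.2) ^+ 2).

Definition is_solution (f : 'rV[R]_n -> 'rV[R]_m -> 'rV[R]_n)
    (u : R -> 'rV[R]_m) (t0 tf : R) (x : R -> 'rV[R]_n) : Prop :=
  {within `[t0, tf], continuous x} /\
  (forall t, t0 < t < tf -> is_derive t 1 x (f (x t) (u t))).

Definition meas (p : nat) (B : 'I_p -> R * R) (tk : nat -> R)
    (ik : nat -> 'I_p) (ix iy : 'I_n) (x : R -> 'rV[R]_n) (k : nat) : R :=
  dist2 (pos ix iy (x (tk k))) (B (ik k)).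

Definition back_indist (f : 'rV[R]_n -> 'rV[R]_m -> 'rV[R]_n)
    (u : R -> 'rV[R]_m) (t0 tf : R) (p : nat) (B : 'I_p -> R * R)
    (tk : nat -> R) (ik : nat -> 'I_p) (kf : nat) (ix iy : 'I_n)
    (qf : 'rV[R]_n) : set 'rV[R]_n :=
  [set qb | exists x xb : R -> 'rV[R]_n,
     [/\ is_solution f u t0 tf x, x tf = qf,
         is_solution f u t0 tf xb, xb tf = qb &
         forall k, (k <= kf)%N -> meas B tk ik ix iy x k = meas B tk ik ix iy xb k]].

Definition u_constructible_at f u t0 tf p B tk ik kf ix iy (qf : 'rV[R]_n) : Prop :=
  @back_indist f u t0 tf p B tk ik kf ix iy qf = [set qf].

Definition u_constructible f u t0 tf p B tk ik kf ix iy : Prop :=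
  forall qf, @u_constructible_at f u t0 tf p B tk ik kf ix iy qf.

End Ranging.

From HB Require Import structures.
From mathcomp Require Import all_boot all_order all_algebra.
From mathcomp Require Import all_classical all_reals all_analysis.
Set Implicit Arguments. Unset Strict Implicit. Unset Printing Implicit Defensive.
Import Order.TTheory GRing.Theory Num.Theory.
Import numFieldNormedType.Exports.
Local Open Scope ring_scope.
Local Open Scope classical_set_scope.

(* Two trajectories under u* with the same ranges are each a roto-translation
   of the abstract trajectory.  Each of these two roto-translations reproduces
   the common ranges at the measurement points, so by the uniqueness
   hypothesis they are the same map; hence the two continuous-time positions
   agree on [t0, tf], and constructibility from the position makes the final
   states equal. *)

Section RangingConstructibility.
Variables (R : realType) (n m : nat) (f : 'rV[R]_n -> 'rV[R]_m -> 'rV[R]_n).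
Variables (ix iy : 'I_n) (t0 tf : R) (PV : (R -> 'rV[R]_m) -> R -> R * R).
Variables (p : nat) (B : 'I_p -> R * R) (kf : nat) (tk : nat -> R).
Variables (ik : nat -> 'I_p) (u : R -> 'rV[R]_m).

Definition fits_position (x : R -> 'rV[R]_n) (tr : R * R * R) : Prop :=
  forall t, t0 <= t <= tf -> pos ix iy (x t) = rototrans tr (PV u t).

Definition fits_ranges (x : R -> 'rV[R]_n) (tr : R * R * R) : Prop :=
  forall k, (k <= kf)%N ->
    dist2 (rototrans tr (PV u (tk k))) (B (ik k)) = meas B tk ik ix iy x k.

Hypothesis tk_in : forall k, (k <= kf)%N -> t0 <= tk k <= tf.

Lemma fits_position_ranges x tr : fits_position x tr -> fits_ranges x tr.
Proof. by move=> fit_x k le_k; rewrite /meas fit_x // tk_in. Qed.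

Lemma fits_ranges_eq_meas x xb tr :
  (forall k, (k <= kf)%N -> meas B tk ik ix iy x k = meas B tk ik ix iy xb k) ->
  fits_ranges x tr -> fits_ranges xb tr.
Proof. by move=> eq_meas fit_x k le_k; rewrite fit_x // eq_meas. Qed.

Hypothesis position_rototrans : forall x, is_solution f u t0 tf x ->
  exists! tr : R * R * R, (- pi < tr.2 <= pi) /\ fits_position x tr.

Hypothesis ranges_rototrans_unique : forall x, is_solution f u t0 tf x ->
  exists! tr : R * R * R, (- pi < tr.2 <= pi) /\ fits_ranges x tr.

Lemma eq_meas_eq_pos x xb :
  is_solution f u t0 tf x -> is_solution f u t0 tf xb ->
  (forall k, (k <= kf)%N -> meas B tk ik ix iy x k = meas B tk ik ix iy xb k) ->
  forall t, t0 <= t <= tf -> pos ix iy (x t) = pos ix iy (xb t).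
Proof.
move=> sol_x sol_xb eq_meas t t_in.
have [tr [[tr_angle fit_x] _]] := position_rototrans sol_x.
have [trb [[trb_angle fit_xb] _]] := position_rototrans sol_xb.
have /unique_existence[_ uniq_ranges] := ranges_rototrans_unique sol_x.
rewrite fit_x // fit_xb //; congr (rototrans _ _).
apply: uniq_ranges; split=> //; first exact: fits_position_ranges.
apply: fits_ranges_eq_meas (fits_position_ranges fit_xb) => k le_k.
exact/esym/eq_meas.
Qed.

Hypothesis position_constructible : forall x xb,
  is_solution f u t0 tf x -> is_solution f u t0 tf xb ->
  (forall t, t0 <= t <= tf -> pos ix iy (x t) = pos ix iy (xb t)) ->
  x tf = xb tf.

Lemma back_indist_sub1 qf :
  back_indist f u t0 tf B tk ik kf ix iy qf `<=` [set qf].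
Proof.
move=> _ [x [xb [sol_x <- sol_xb <- eq_meas]]].
by apply/esym/position_constructible => //; apply: eq_meas_eq_pos.
Qed.

End RangingConstructibility.

Theorem lemma1 (R : realType) (n m : nat)
  (f : 'rV[R]_n -> 'rV[R]_m -> 'rV[R]_n)
  (ix iy : 'I_n) (hxy : ix != iy)
  (t0 tf : R) (ht : t0 < tf)
  (PV : (R -> 'rV[R]_m) -> R -> R * R)
  (p : nat) (B : 'I_p -> R * R)
  (kf : nat) (tk : nat -> R) (ik : nat -> 'I_p)
  (htk_inc : forall k, tk k < tk k.+1)
  (htk_in : forall k, (k <= kf)%N -> t0 <= tk k <= tf)
  (ustar : R -> 'rV[R]_m)
  (* Property: the vehicle-frame trajectory determines the true one up to a
     unique roto-translation (angle taken in (-pi, pi]) *)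
  (Hprop : forall (u : R -> 'rV[R]_m) (x : R -> 'rV[R]_n),
     is_solution f u t0 tf x ->
     exists! tr : R * R * R, (- pi < tr.2 <= pi) /\
       (forall t, t0 <= t <= tf -> pos ix iy (x t) = rototrans tr (PV u t)))
  (* Assumption: constructibility with the continuous position as output *)
  (Hconstr : forall (u : R -> 'rV[R]_m) (x xb : R -> 'rV[R]_n),
     is_solution f u t0 tf x -> is_solution f u t0 tf xb ->
     (forall t, t0 <= t <= tf -> pos ix iy (x t) = pos ix iy (xb t)) ->
     x tf = xb tf)
  (* well-posedness: every final state is reached by some trajectory under u* *)
  (Hexist : forall qf : 'rV[R]_n,
     exists x, is_solution f ustar t0 tf x /\ x tf = qf)
  (* hypothesis of the theorem: for the measurements rho_k generated by any
     trajectory of the system under u*, the roto-translation of the abstract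
     trajectory matching them is unique *)
  (Huniq : forall x : R -> 'rV[R]_n, is_solution f ustar t0 tf x ->
     exists! tr : R * R * R, (- pi < tr.2 <= pi) /\
       (forall k, (k <= kf)%N ->
          dist2 (rototrans tr (PV ustar (tk k))) (B (ik k))
          = meas B tk ik ix iy x k)) :
  u_constructible f ustar t0 tf B tk ik kf ix iy.
Proof.
move=> qf; apply/seteqP; split.
  exact: (back_indist_sub1 htk_in (Hprop ustar) Huniq (Hconstr ustar)).
move=> _ ->; have [x [sol_x <-]] := Hexist qf.
by exists x, x.
Qed.
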